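(* Let $\sum_{\mathbf i}a_{\mathbf i}\,x_{i_1}x_{i_2}\cdots x_{i_n}$ ($a_{\mathbf i}\in K$) be a homogeneous primitive element of degree $n$ of the free associative algebra $K\langle x_1,\dots,x_n\rangle$. Then $$\sum_{\mathbf i}a_{\mathbf i}\,(\cdots((x_{i_1}\cdot x_{i_2})\cdot x_{i_3})\cdots)\cdot x_{i_n}\quad\text{and}\quad\sum_{\mathbf i}a_{\mathbf i}\,x_{i_1}\cdot(x_{i_2}\cdot(\cdots(x_{i_{n-1}}\cdot x_{i_n})\cdots))$$ are homogeneous primitive elements of degree $n$ of $K\{x_1,\dots,x_n\}$. In particular, for $n\ge3$, $\mathrm{Prim}\,\mathcal Mag(n)$ contains at least two copies of the $\Sigma_n$-representation $\mathcal Lie(n)$.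
   Context: $K$ is a field of characteristic $0$. In $K\langle x_1,\dots,x_n\rangle$ (free unital associative algebra), an element $f$ is primitive if $\Delta(f)=f\otimes1+1\otimes f$, where $\Delta$ is the algebra homomorphism with $\Delta(x_i)=x_i\otimes1+1\otimes x_i$. $K\{x_1,\dots,x_n\}$ is the free unitary magma algebra (non-associative, non-commutative, unit $1$, product $a\cdot b$); its tensor square is a magma algebra componentwise with $1\cdot a=a\cdot1=a$, and the co-addition $\Delta_a$ is the unital algebra homomorphism with $\Delta_a(x_i)=x_i\otimes1+1\otimes x_i$; $f$ is primitive if $\Delta_a(f)=f\otimes1+1\otimes f$. $\mathrm{Prim}\,\mathcal Mag(n)$ is the space of primitive elements of $K\{x_1,\dots,x_n\}$ multilinear of degree $n$, with $\Sigma_n$ acting by permuting variables; $\mathcal Lie(n)$ is the $\Sigma_n$-module of multilinear Lie polynomials of degree $n$ in $x_1,\dots,x_n$ (of dimension $(n-1)!$). *)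

From HB Require Import structures.
From mathcomp Require Import all_boot all_order all_algebra all_fingroup.
From mathcomp Require Import finmap.
From mathcomp.multinomials Require Import monalg.

Set Implicit Arguments.
Unset Strict Implicit.
Unset Printing Implicit Defensive.

Import GRing.Theory.
Local Open Scope ring_scope.

Section FreeModule.
Variable K : fieldType.

Definition linext (B C : choiceType) (phi : B -> {malg K[C]}) (f : {malg K[B]})
  : {malg K[C]} := \sum_(u <- msupp f) f@_u *: phi u.

Definition bilext (B : choiceType) (op : B -> B -> B) (f g : {malg K[B]})
  : {malg K[B]} :=
  \sum_(u <- msupp f) \sum_(v <- msupp g) << f@_u * g@_v *g op u v >>.

(* tensor product of two elements; the tensor square of the free module on
   B is identified with the free module on B * B (basis u (x) v = (u, v)) *)
Definition tens (B : choiceType) (f g : {malg K[B]}) : {malg K[(B * B)%type]} :=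
  \sum_(u <- msupp f) \sum_(v <- msupp g) << f@_u * g@_v *g (u, v) >>.
End FreeModule.

Definition pairop (B : Type) (op : B -> B -> B) (x y : B * B) : B * B :=
  (op x.1 y.1, op x.2 y.2).

Section FreeAssoc.
Variables (K : fieldType) (n : nat).

Definition word := seq 'I_n.
Definition assocAlg := {malg K[seq 'I_n]}.
Definition assocT2 := {malg K[(seq 'I_n * seq 'I_n)%type]}.

Definition amul (f g : assocAlg) : assocAlg := bilext (@cat 'I_n) f g.
Definition amul2 (f g : assocT2) : assocT2 := bilext (pairop (@cat 'I_n)) f g.
Definition aone : assocAlg := << [::] >>.
Definition aone2 : assocT2 := << ([::], [::]) >>.
Definition avar (i : 'I_n) : assocAlg := << [:: i] >>.

Definition Delta_var (i : 'I_n) : assocT2 :=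
  << ([:: i], [::]) >> + << ([::], [:: i]) >>.

Definition Delta_word (w : word) : assocT2 :=
  foldr (fun i acc => amul2 (Delta_var i) acc) aone2 w.

Definition Delta (f : assocAlg) : assocT2 := linext Delta_word f.

Definition assoc_primitive (f : assocAlg) : Prop :=
  Delta f = tens f aone + tens aone f.

Definition assoc_homog (d : nat) (f : assocAlg) : Prop :=
  forall w, w \in msupp f -> size w = d.

Definition assoc_multilinear (f : assocAlg) : Prop :=
  forall w, w \in msupp f -> perm_eq w (enum 'I_n).

Inductive is_lie : assocAlg -> Prop :=
| lie_var i : is_lie (avar i)
| lie_zero : is_lie 0
| lie_add p q : is_lie p -> is_lie q -> is_lie (p + q)
| lie_scale (c : K) p : is_lie p -> is_lie (c *: p)
| lie_bracket p q : is_lie p -> is_lie q -> is_lie (amul p q - amul q p).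

Definition in_Lie (f : assocAlg) : Prop := is_lie f /\ assoc_multilinear f.

Definition assoc_act (s : {perm 'I_n}) (f : assocAlg) : assocAlg :=
  linext (fun w : seq 'I_n => << map s w >> : assocAlg) f.
End FreeAssoc.

(* basis: option (mtree n), None = 1, Some t = nonempty bracketing     *)
Inductive mtree (n : nat) : Type :=
| MLeaf of 'I_n
| MNode of mtree n & mtree n.
Arguments MLeaf {n}.
Arguments MNode {n}.

Section MtreeCount.
Variable n : nat.
Fixpoint mtree_enc (t : mtree n) : GenTree.tree 'I_n :=
  match t with
  | MLeaf i => GenTree.Leaf i
  | MNode a b => GenTree.Node 0 [:: mtree_enc a; mtree_enc b]
  end.
Fixpoint mtree_dec (t : GenTree.tree 'I_n) : option (mtree n) :=
  match t with
  | GenTree.Leaf i => Some (MLeaf i)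
  | GenTree.Node _ [:: a; b] =>
      match mtree_dec a, mtree_dec b with
      | Some x, Some y => Some (MNode x y)
      | _, _ => None
      end
  | _ => None
  end.
Lemma mtree_encK : pcancel mtree_enc mtree_dec.
Proof. by elim=> [i|a IHa b IHb] //=; rewrite IHa IHb. Qed.
HB.instance Definition _ := Countable.copy (mtree n) (pcan_type mtree_encK).
End MtreeCount.

Section FreeMagma.
Variables (K : fieldType) (n : nat).

Definition mbasis := option (mtree n).
Definition magAlg := {malg K[option (mtree n)]}.
Definition magT2 := {malg K[(option (mtree n) * option (mtree n))%type]}.

Definition mop (u v : option (mtree n)) : option (mtree n) :=
  match u, v with
  | None, _ => v
  | _, None => u
  | Some a, Some b => Some (MNode a b)
  end.

Definition mmulA (f g : magAlg) : magAlg := bilext mop f g.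
Definition mmul2 (f g : magT2) : magT2 := bilext (pairop mop) f g.
Definition mag_one : magAlg := << None >>.
Definition mag_one2 : magT2 := << (None, None) >>.

Fixpoint Delta_tree (t : mtree n) : magT2 :=
  match t with
  | MLeaf i => << (Some (MLeaf i), None) >> + << (None, Some (MLeaf i)) >>
  | MNode a b => mmul2 (Delta_tree a) (Delta_tree b)
  end.
Definition Delta_basis (u : option (mtree n)) : magT2 :=
  if u is Some t then Delta_tree t else mag_one2.
Definition Delta_a (f : magAlg) : magT2 := linext Delta_basis f.

Definition mag_primitive (f : magAlg) : Prop :=
  Delta_a f = tens f mag_one + tens mag_one f.

Fixpoint leaves (t : mtree n) : seq 'I_n :=
  match t with
  | MLeaf i => [:: i]
  | MNode a b => leaves a ++ leaves b
  end.

Definition mdeg (u : option (mtree n)) : nat :=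
  if u is Some t then size (leaves t) else 0.

Definition mag_homog (d : nat) (f : magAlg) : Prop :=
  forall u, u \in msupp f -> mdeg u = d.

Definition mag_multilinear (f : magAlg) : Prop :=
  forall u, u \in msupp f -> perm_eq (if u is Some t then leaves t else [::]) (enum 'I_n).

Definition in_PrimMag (f : magAlg) : Prop := mag_primitive f /\ mag_multilinear f.

Fixpoint relabel (s : {perm 'I_n}) (t : mtree n) : mtree n :=
  match t with
  | MLeaf i => MLeaf (s i)
  | MNode a b => MNode (relabel s a) (relabel s b)
  end.

Definition mag_act (s : {perm 'I_n}) (f : magAlg) : magAlg :=
  linext (fun u : option (mtree n) => << omap (relabel s) u >> : magAlg) f.

Definition lnorm_word (w : seq 'I_n) : option (mtree n) :=
  if w is i :: w' then Some (foldl (fun t j => MNode t (MLeaf j)) (MLeaf i) w')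
  else None.
Fixpoint rnorm_word (w : seq 'I_n) : option (mtree n) :=
  match w with
  | [::] => None
  | [:: i] => Some (MLeaf i)
  | i :: w' => omap (MNode (MLeaf i)) (rnorm_word w')
  end.

Definition lnorm (f : assocAlg K n) : magAlg :=
  linext (fun w : seq 'I_n => << lnorm_word w >> : magAlg) f.
Definition rnorm (f : assocAlg K n) : magAlg :=
  linext (fun w : seq 'I_n => << rnorm_word w >> : magAlg) f.
End FreeMagma.

From Pilot Require Import Defs.
From HB Require Import structures.
From mathcomp Require Import all_boot all_order all_algebra all_fingroup.
From mathcomp Require Import finmap.
From mathcomp.multinomials Require Import monalg.

(* Left-norming a word, w |-> (...((x_i1 x_i2) x_i3) ...) x_ik, turns appending a letter j
   into right magma multiplication by x_j.  As Delta(x_j) = x_j (x) 1 + 1 (x) x_j, the map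
   lnorm (x) lnorm therefore intertwines right multiplication by Delta(x_j) in the two tensor
   squares, and induction on words gives Delta_a (lnorm f) = (lnorm (x) lnorm) (Delta f).
   Applied to Delta f = f (x) 1 + 1 (x) f this is the primitivity of lnorm f; right-norming
   is the mirror image.  Lie polynomials are primitive because Delta is multiplicative.
   Finally, the left- and right-normed bracketings of a word of length >= 3 differ (only the
   former has a leaf as right child of the root), so lnorm and rnorm have disjoint supports
   in degree n >= 3 and Lie(n) (+) Lie(n) embeds into Prim Mag(n). *)

Set Implicit Arguments.
Unset Strict Implicit.
Unset Printing Implicit Defensive.

Import GRing.Theory.
Local Open Scope ring_scope.

Section LinearExtension.
Variable K : fieldType.
Implicit Types B C : choiceType.

Lemma monalgUZ B (c : K) (u : B) : << c *g u >> = c *: (<< u >> : {malg K[B]}).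
Proof. by apply/malgP => k; rewrite mcoeffZ !mcoeffU mulr_natr. Qed.

Lemma linextEw B C (phi : B -> {malg K[C]}) f (d : {fset B}) :
  (msupp f `<=` d)%fset -> linext phi f = \sum_(u <- d) f@_u *: phi u.
Proof.
move=> le_fd; rewrite /linext (big_fset_incl _ le_fd) // => u _ /mcoeff_outdom ->.
by rewrite scale0r.
Qed.

Lemma linext_is_linear B C (phi : B -> {malg K[C]}) : linear (linext phi).
Proof.
move=> c f g.
have le_cfg : (msupp (c *: f + g) `<=` msupp f `|` msupp g)%fset.
  by apply: fsubset_trans (msuppD_le _ _) _; apply/fsetSU/msuppZ_le.
rewrite (linextEw phi le_cfg) (linextEw phi (fsubsetUl (msupp f) (msupp g))).
rewrite (linextEw phi (fsubsetUr (msupp f) (msupp g))).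
rewrite scaler_sumr -big_split; apply: eq_bigr => u _.
by rewrite mcoeffD mcoeffZ scalerDl scalerA.
Qed.

HB.instance Definition _ B C (phi : B -> {malg K[C]}) :=
  GRing.isLinear.Build K {malg K[B]} {malg K[C]} _ (linext phi) (linext_is_linear phi).

Lemma linextU B C (phi : B -> {malg K[C]}) u : linext phi << u >> = phi u.
Proof. by rewrite /linext msuppU oner_eq0 big_seq_fset1 mcoeffUU scale1r. Qed.

Lemma linear_malgE B C (P : {linear {malg K[B]} -> {malg K[C]}}) :
  P =1 linext (fun u => P << u >>).
Proof.
move=> f; rewrite {1}(monalgE f) linear_sum; apply: eq_bigr => u _.
by rewrite monalgUZ linearZ.
Qed.

Lemma linear_malg_eq B C (P Q : {malg K[B]} -> {malg K[C]}) :
  linear P -> linear Q -> (forall u, P << u >> = Q << u >>) -> P =1 Q.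
Proof.
move=> linP linQ PQ f.
pose PL : {linear _ -> _} := HB.pack P (GRing.isLinear.Build _ _ _ _ P linP).
pose QL : {linear _ -> _} := HB.pack Q (GRing.isLinear.Build _ _ _ _ Q linQ).
rewrite [P f](linear_malgE PL) [Q f](linear_malgE QL).
by apply: eq_bigr => u _; congr (_ *: _); apply: PQ.
Qed.
End LinearExtension.

Section BilinearExtension.
Variable K : fieldType.
Implicit Types B C : choiceType.

Definition malg_bilext B1 B2 C (F : B1 -> B2 -> C) (f : {malg K[B1]}) (g : {malg K[B2]})
  : {malg K[C]} := \sum_(u <- msupp f) \sum_(v <- msupp g) << f@_u * g@_v *g F u v >>.

Lemma malg_bilextEl B1 B2 C (F : B1 -> B2 -> C) f g :
  malg_bilext F f g = linext (fun u => linext (fun v => << F u v >>) g) f.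
Proof.
apply: eq_bigr => u _; rewrite /linext scaler_sumr; apply: eq_bigr => v _.
by rewrite monalgUZ scalerA.
Qed.

Lemma malg_bilextEr B1 B2 C (F : B1 -> B2 -> C) f g :
  malg_bilext F f g = linext (fun v => linext (fun u => << F u v >>) f) g.
Proof.
rewrite /malg_bilext exchange_big; apply: eq_bigr => v _.
rewrite /linext scaler_sumr; apply: eq_bigr => u _.
by rewrite monalgUZ scalerA mulrC.
Qed.

Lemma malg_bilext_is_bilinear B1 B2 C (F : B1 -> B2 -> C) :
  bilinear_for *:%R *:%R
    (malg_bilext F : {malg K[B1]} -> {malg K[B2]} -> {malg K[C]}).
Proof.
split=> [g|f] c u v; first by rewrite !malg_bilextEl linearP.
by rewrite !malg_bilextEr linearP.
Qed.

HB.instance Definition _ B1 B2 C (F : B1 -> B2 -> C) :=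
  bilinear_isBilinear.Build K _ _ _ _ _ (malg_bilext F) (malg_bilext_is_bilinear F).
HB.instance Definition _ B (op : B -> B -> B) :=
  bilinear_isBilinear.Build K _ _ _ _ _ (bilext op) (malg_bilext_is_bilinear op).
HB.instance Definition _ B :=
  bilinear_isBilinear.Build K _ _ _ _ _ (@tens K B) (malg_bilext_is_bilinear pair).

Lemma malg_bilextUU B1 B2 C (F : B1 -> B2 -> C) u v :
  malg_bilext F << u >> << v >> = << F u v >> :> {malg K[C]}.
Proof. by rewrite malg_bilextEl !linextU. Qed.

Lemma bilextUU B (op : B -> B -> B) u v :
  bilext op << u >> << v >> = << op u v >> :> {malg K[B]}.
Proof. exact: malg_bilextUU. Qed.

Lemma tensUU B (u v : B) : tens << u >> << v >> = << (u, v) >> :> {malg K[(B * B)%type]}.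
Proof. exact: malg_bilextUU. Qed.

End BilinearExtension.

Lemma pairop_assoc T (op : T -> T -> T) : associative op -> associative (pairop op).
Proof. by move=> opA [x1 x2] [y1 y2] [z1 z2]; rewrite /pairop /= !opA. Qed.

Lemma pairop_left_id T (e : T) (op : T -> T -> T) :
  left_id e op -> left_id (e, e) (pairop op).
Proof. by move=> e_op [x1 x2]; rewrite /pairop /= !e_op. Qed.

Lemma pairop_right_id T (e : T) (op : T -> T -> T) :
  right_id e op -> right_id (e, e) (pairop op).
Proof. by move=> op_e [x1 x2]; rewrite /pairop /= !op_e. Qed.

Section BasisAlgebra.
Variables (K : fieldType) (B : choiceType).
Implicit Types (op : B -> B -> B) (e : B) (f g : {malg K[B]}).

Lemma bilext_assoc op : associative op -> associative (bilext op : _ -> _ -> {malg K[B]}).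
Proof.
move=> opA f g h.
move: f; apply: linear_malg_eq => [a x y|a x y|u]; rewrite ?(linearPl, linearPr) //=.
move: g; apply: linear_malg_eq => [a x y|a x y|v]; rewrite ?(linearPl, linearPr) //=.
move: h; apply: linear_malg_eq => [a x y|a x y|w]; rewrite ?(linearPl, linearPr) //=.
by rewrite !bilextUU opA.
Qed.

Lemma bilext_left_id op e : left_id e op -> left_id << e >> (bilext op : _ -> _ -> {malg K[B]}).
Proof.
move=> e_op f; move: f; apply: linear_malg_eq => [a x y|//|u]; rewrite ?linearPr //=.
by rewrite bilextUU e_op.
Qed.

Lemma bilext_right_id op e : right_id e op -> right_id << e >> (bilext op : _ -> _ -> {malg K[B]}).
Proof.
move=> op_e f; move: f; apply: linear_malg_eq => [a x y|//|u]; rewrite ?linearPl //=.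
by rewrite bilextUU op_e.
Qed.

Lemma bilext_pair_tens op f1 f2 g1 g2 :
  bilext (pairop op) (tens f1 f2) (tens g1 g2) = tens (bilext op f1 g1) (bilext op f2 g2).
Proof.
move: f1; apply: linear_malg_eq => [a x y|a x y|u1]; rewrite ?(linearPl, linearPr) //=.
move: f2; apply: linear_malg_eq => [a x y|a x y|u2]; rewrite ?(linearPl, linearPr) //=.
move: g1; apply: linear_malg_eq => [a x y|a x y|v1]; rewrite ?(linearPl, linearPr) //=.
move: g2; apply: linear_malg_eq => [a x y|a x y|v2]; rewrite ?(linearPl, linearPr) //=.
by rewrite !tensUU !bilextUU tensUU.
Qed.

Definition primitive (D : {malg K[B]} -> {malg K[(B * B)%type]}) e f :=
  D f = tens f << e >> + tens << e >> f.

Section PrimitiveElements.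
Variables (D : {linear {malg K[B]} -> {malg K[(B * B)%type]}}) (e : B).

Lemma primitive0 : primitive D e 0.
Proof. by rewrite /primitive linear0 linear0l linear0r addr0. Qed.

Lemma primitiveD f g : primitive D e f -> primitive D e g -> primitive D e (f + g).
Proof. by rewrite /primitive linearD /= => -> ->; rewrite linearDl linearDr /=; apply: addrACA. Qed.

Lemma primitiveZ c f : primitive D e f -> primitive D e (c *: f).
Proof. by rewrite /primitive linearZ_LR /= => ->; rewrite linearZl_LR linearZr_LR /= scalerDr. Qed.

Lemma primitive_commutator op f g :
  left_id e op -> right_id e op ->
  (forall f g, D (bilext op f g) = bilext (pairop op) (D f) (D g)) ->
  primitive D e f -> primitive D e g -> primitive D e (bilext op f g - bilext op g f).
Proof.
move=> e_op op_e Dmul.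
have Dmul_prim f1 f2 : primitive D e f1 -> primitive D e f2 ->
    D (bilext op f1 f2) = tens (bilext op f1 f2) << e >> + tens f1 f2
                          + (tens f2 f1 + tens << e >> (bilext op f1 f2)).
  move=> Df1 Df2; rewrite Dmul Df1 Df2 !(linearDl, linearDr) /= !bilext_pair_tens.
  by rewrite !(bilext_left_id e_op, bilext_right_id op_e).
have cancel_mid (V : zmodType) (x y z t a b : V) :
    x + a + (b + y) - (z + b + (a + t)) = (x - z) + (y - t).
  have -> : x + a + (b + y) = x + y + (a + b) by rewrite [b + y]addrC addrACA.
  have -> : z + b + (a + t) = a + b + (z + t) by rewrite (addrC z) addrACA (addrC b).
  by rewrite addrKA opprD addrACA.
move=> pf pg; rewrite /primitive linearB /= (Dmul_prim f g pf pg) (Dmul_prim g f pg pf).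
by rewrite cancel_mid linearBl linearBr.
Qed.
End PrimitiveElements.
End BasisAlgebra.

Section BasisMaps.
Variable K : fieldType.
Implicit Types B C : choiceType.

Lemma linext_bilext B C (op : B -> B -> B) (op' : C -> C -> C) (phi : B -> {malg K[C]}) f g :
  (forall u v, phi (op u v) = bilext op' (phi u) (phi v)) ->
  linext phi (bilext op f g) = bilext op' (linext phi f) (linext phi g).
Proof.
move=> phiM.
move: f; apply: linear_malg_eq => [a x y|a x y|u]; rewrite ?(linearP, linearPl, linearPr) //=.
move: g; apply: linear_malg_eq => [a x y|a x y|v]; rewrite ?(linearP, linearPl, linearPr) //=.
by rewrite bilextUU !linextU.
Qed.

Definition malg_map B C (h : B -> C) (f : {malg K[B]}) : {malg K[C]} :=
  linext (fun u => << h u >>) f.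

HB.instance Definition _ B C (h : B -> C) :=
  GRing.isLinear.Build K {malg K[B]} {malg K[C]} _ (malg_map h) (linext_is_linear _).

Lemma malg_mapU B C (h : B -> C) u : malg_map h << u >> = << h u >>.
Proof. exact: linextU. Qed.

Lemma malg_map_comp B C (E : choiceType) (h : C -> E) (g : B -> C) f :
  malg_map h (malg_map g f) = malg_map (h \o g) f.
Proof.
by move: f; apply: linear_malg_eq => [a x y|a x y|u]; rewrite ?linearP //= !malg_mapU.
Qed.

Lemma mcoeff_malg_map B C (h : B -> C) f x :
  (malg_map h f)@_x = \sum_(u <- msupp f | h u == x) f@_u.
Proof.
rewrite {1}(monalgE f) linear_sum raddf_sum [RHS]big_mkcond /=; apply: eq_bigr => u _.
by rewrite (monalgUZ (f@_u) u) linearZ /= malg_mapU mcoeffZ mcoeffU mulr_natr; case: eqP.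
Qed.

Lemma msupp_malg_map B C (h : B -> C) f x :
  x \in msupp (malg_map h f) -> exists2 u, u \in msupp f & x = h u.
Proof.
move=> xf; have /hasP[u uf /eqP <-] : has (fun u => h u == x) (msupp f); last by exists u.
apply: contraLR xf => /hasPn none; rewrite -mcoeff_eq0 mcoeff_malg_map.
by rewrite big1_seq // => u /andP[hux /none]; rewrite hux.
Qed.

Lemma mcoeff_malg_map_inj B C (h : B -> C) f u :
  injective h -> (malg_map h f)@_(h u) = f@_u.
Proof.
move=> inj_h; rewrite mcoeff_malg_map.
under eq_bigl do rewrite (inj_eq inj_h).
have [uf|uNf] := boolP (u \in msupp f).
  by rewrite -big_filter filter_pred1_uniq // big_seq1.
rewrite (mcoeff_outdom uNf) big1_seq // => v /andP[/eqP -> uf].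
by rewrite uf in uNf.
Qed.

Definition pair_map B C (h : B -> C) (p : B * B) : C * C := (h p.1, h p.2).

Lemma malg_map_tens B C (h : B -> C) f g :
  malg_map (pair_map h) (tens f g) = tens (malg_map h f) (malg_map h g).
Proof.
move: f; apply: linear_malg_eq => [a x y|a x y|u]; rewrite ?(linearP, linearPl) //=.
move: g; apply: linear_malg_eq => [a x y|a x y|v]; rewrite ?(linearP, linearPr) //=.
by rewrite !tensUU !malg_mapU tensUU.
Qed.

Lemma malg_map_primitive B C (D : {malg K[B]} -> {malg K[(B * B)%type]})
    (D' : {malg K[C]} -> {malg K[(C * C)%type]}) e e' (h : B -> C) f :
  h e = e' -> D' (malg_map h f) = malg_map (pair_map h) (D f) ->
  primitive D e f -> primitive D' e' (malg_map h f).
Proof.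
by rewrite /primitive => he -> ->; rewrite linearD /= !malg_map_tens malg_mapU he.
Qed.

(* [Delta_var K i] and [Delta_tree K (MLeaf i)] are definitionally of this form. *)
Definition prim_coprod B (e x : B) : {malg K[(B * B)%type]} := << (x, e) >> + << (e, x) >>.

Lemma malg_map_pair_mulr B C (op : B -> B -> B) (op' : C -> C -> C) e e' (h : B -> C) x c X :
  right_id e op -> right_id e' op' -> (forall u, h (op u x) = op' (h u) c) ->
  malg_map (pair_map h) (bilext (pairop op) X (prim_coprod e x))
  = bilext (pairop op') (malg_map (pair_map h) X) (prim_coprod e' c).
Proof.
move=> op_e op'_e' hx.
move: X; apply: linear_malg_eq => [a u v|a u v|[u v]]; rewrite ?(linearP, linearPl) //=.
rewrite /prim_coprod !linearDr /= !bilextUU linearD /= !malg_mapU !bilextUU.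
by rewrite /pair_map /pairop /= !op_e !op'_e' !hx.
Qed.

Lemma malg_map_pair_mull B C (op : B -> B -> B) (op' : C -> C -> C) e e' (h : B -> C) x c X :
  left_id e op -> left_id e' op' -> (forall u, h (op x u) = op' c (h u)) ->
  malg_map (pair_map h) (bilext (pairop op) (prim_coprod e x) X)
  = bilext (pairop op') (prim_coprod e' c) (malg_map (pair_map h) X).
Proof.
move=> e_op e'_op' hx.
move: X; apply: linear_malg_eq => [a u v|a u v|[u v]]; rewrite ?(linearP, linearPr) //=.
rewrite /prim_coprod !linearDl /= !bilextUU linearD /= !malg_mapU !bilextUU.
by rewrite /pair_map /pairop /= !e_op !e'_op' !hx.
Qed.
End BasisMaps.

Section FreeAssocCoproduct.
Variables (K : fieldType) (n : nat).

HB.instance Definition _ := GRing.isLinear.Build K {malg K[seq 'I_n]}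
  {malg K[(seq 'I_n * seq 'I_n)%type]} _ (@Delta K n) (linext_is_linear _).

Lemma Delta_word_cat (u v : seq 'I_n) :
  Delta_word K (u ++ v) = amul2 (Delta_word K u) (Delta_word K v).
Proof.
elim: u => [|i u IHu] /=; first exact/esym/bilext_left_id/pairop_left_id/cat0s.
by rewrite IHu; apply: (bilext_assoc (pairop_assoc (@catA _))).
Qed.

Lemma Delta_mul (f g : assocAlg K n) : Delta (amul f g) = amul2 (Delta f) (Delta g).
Proof. exact: linext_bilext Delta_word_cat. Qed.

Lemma Delta_word1 (i : 'I_n) : Delta_word K [:: i] = Delta_var K i.
Proof. exact/bilext_right_id/pairop_right_id/cats0. Qed.

Lemma avar_primitive (i : 'I_n) : assoc_primitive (avar K i).
Proof.
rewrite /assoc_primitive /Delta linextU Delta_word1.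
by congr (_ + _); symmetry; apply: tensUU.
Qed.

Lemma lie_primitive (p : assocAlg K n) : is_lie p -> assoc_primitive p.
Proof.
elim=> [i| |{}p q _ Dp _ Dq|c {}p _ Dp|{}p q _ Dp _ Dq].
- exact: avar_primitive.
- exact: primitive0.
- exact: (primitiveD (e := [::]) Dp Dq).
- exact: (primitiveZ (e := [::]) c Dp).
- exact: (primitive_commutator (@cat0s _) (@cats0 _) Delta_mul Dp Dq).
Qed.
End FreeAssocCoproduct.

Section FreeMagmaCoproduct.
Variables (K : fieldType) (n : nat).

HB.instance Definition _ := GRing.isLinear.Build K {malg K[option (mtree n)]}
  {malg K[(option (mtree n) * option (mtree n))%type]} _ (@Delta_a K n) (linext_is_linear _).

Lemma mop_left_id : left_id None (@mop n).
Proof. by []. Qed.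

Lemma mop_right_id : right_id None (@mop n).
Proof. by case. Qed.

Lemma Delta_basis_mop (x y : option (mtree n)) :
  Delta_basis K (mop x y) = mmul2 (Delta_basis K x) (Delta_basis K y).
Proof.
case: x y => [s|] [t|] //=; apply/esym;
  [exact/bilext_right_id/pairop_right_id/mop_right_id
  | exact/bilext_left_id/pairop_left_id/mop_left_id ..].
Qed.

Lemma lnorm_word_rcons (w : seq 'I_n) j :
  lnorm_word (rcons w j) = mop (lnorm_word w) (Some (MLeaf j)).
Proof. by case: w => [|i w] //=; rewrite foldl_rcons. Qed.

Lemma rnorm_word_cons i (w : seq 'I_n) :
  rnorm_word (i :: w) = mop (Some (MLeaf i)) (rnorm_word w).
Proof.
elim: w i => [|j w IHw] i //.
change (omap (MNode (MLeaf i)) (rnorm_word (j :: w)) = mop (Some (MLeaf i)) (rnorm_word (j :: w))).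
by rewrite IHw; case: (rnorm_word w).
Qed.

Lemma Delta_basis_lnorm_word (w : seq 'I_n) :
  Delta_basis K (lnorm_word w) = malg_map (pair_map (@lnorm_word n)) (Delta_word K w).
Proof.
elim/last_ind: w => [|w j IHw]; first by rewrite malg_mapU.
rewrite lnorm_word_rcons Delta_basis_mop IHw -cats1 Delta_word_cat Delta_word1.
symmetry; apply: malg_map_pair_mulr; [exact: cats0 | exact: mop_right_id | move=> u].
by rewrite cats1 lnorm_word_rcons.
Qed.

Lemma Delta_basis_rnorm_word (w : seq 'I_n) :
  Delta_basis K (rnorm_word w) = malg_map (pair_map (@rnorm_word n)) (Delta_word K w).
Proof.
elim: w => [|i w IHw]; first by rewrite malg_mapU.
rewrite rnorm_word_cons Delta_basis_mop IHw /=.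
symmetry; apply: malg_map_pair_mull; [exact: cat0s | exact: mop_left_id | move=> u].
exact: rnorm_word_cons.
Qed.

Lemma mag_primitive_malg_map (h : seq 'I_n -> option (mtree n)) (f : assocAlg K n) :
  h [::] = None -> (forall w, Delta_basis K (h w) = malg_map (pair_map h) (Delta_word K w)) ->
  assoc_primitive f -> mag_primitive (malg_map h f).
Proof.
move=> h0 Dh; apply: malg_map_primitive h0 _.
move: f; apply: linear_malg_eq => [a x y|a x y|w]; rewrite ?linearP //=.
by rewrite malg_mapU /Delta_a /Delta !linextU Dh.
Qed.

Lemma lnorm_primitive (f : assocAlg K n) : assoc_primitive f -> mag_primitive (lnorm f).
Proof. exact: (@mag_primitive_malg_map (@lnorm_word n) f erefl Delta_basis_lnorm_word). Qed.

Lemma rnorm_primitive (f : assocAlg K n) : assoc_primitive f -> mag_primitive (rnorm f).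
Proof. exact: (@mag_primitive_malg_map (@rnorm_word n) f erefl Delta_basis_rnorm_word). Qed.
End FreeMagmaCoproduct.

Definition basis_leaves {n} (u : option (mtree n)) : seq 'I_n :=
  if u is Some t then leaves t else [::].

Definition right_leaf {n} (u : option (mtree n)) : bool :=
  if u is Some (MNode _ (MLeaf _)) then true else false.

Section NormedWords.
Variable n : nat.

Lemma lnorm_wordK : cancel (@lnorm_word n) basis_leaves.
Proof.
elim/last_ind => [|w j IHw] //; rewrite lnorm_word_rcons -{2}IHw.
by case: (lnorm_word w) => [t|] //=; rewrite cats1.
Qed.

Lemma rnorm_wordK : cancel (@rnorm_word n) basis_leaves.
Proof. by elim=> [|i w IHw] //; rewrite rnorm_word_cons -{2}IHw; case: (rnorm_word w). Qed.

Lemma lnorm_word_map (s : {perm 'I_n}) (w : seq 'I_n) :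
  lnorm_word (map s w) = omap (relabel s) (lnorm_word w).
Proof.
elim/last_ind: w => [|w j IHw] //.
by rewrite map_rcons !lnorm_word_rcons IHw; case: (lnorm_word w).
Qed.

Lemma rnorm_word_map (s : {perm 'I_n}) (w : seq 'I_n) :
  rnorm_word (map s w) = omap (relabel s) (rnorm_word w).
Proof.
elim: w => [|i w IHw] //.
by rewrite map_cons !rnorm_word_cons IHw; case: (rnorm_word w).
Qed.

Lemma right_leaf_lnorm_word (w : seq 'I_n) : (1 < size w)%N -> right_leaf (lnorm_word w).
Proof.
elim/last_ind: w => [|w j _] //; rewrite size_rcons ltnS lnorm_word_rcons.
case E: (lnorm_word w) => [t|] //= w_gt0.
by move/(congr1 basis_leaves): E; rewrite lnorm_wordK => w0; rewrite w0 in w_gt0.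
Qed.

Lemma right_leaf_rnorm_word (w : seq 'I_n) : (2 < size w)%N -> ~~ right_leaf (rnorm_word w).
Proof.
case: w => [|a [|b [|c w]]] // _.
by rewrite !rnorm_word_cons; case: (rnorm_word w).
Qed.

Lemma lnorm_word_eq_rnorm_word (w w' : seq 'I_n) :
  (lnorm_word w == rnorm_word w') = (w == w') && (size w <= 2)%N.
Proof.
apply/eqP/andP => [eq_lr|[/eqP <-]]; last by case: w => [|a [|b [|c w]]].
have eq_ww' : w = w' by rewrite -(lnorm_wordK w) eq_lr rnorm_wordK.
split; first by rewrite eq_ww'.
rewrite leqNgt; apply/negP => w_gt2.
have := right_leaf_rnorm_word w_gt2; rewrite eq_ww' -eq_lr right_leaf_lnorm_word //.
exact: ltnW.
Qed.
End NormedWords.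

Section NormedEmbeddings.
Variables (K : fieldType) (n : nat).
Implicit Types (h : seq 'I_n -> option (mtree n)) (f p q : assocAlg K n).

Lemma assoc_multilinear_homog f : assoc_multilinear f -> assoc_homog n f.
Proof. by move=> fml w /fml/perm_size ->; rewrite size_enum_ord. Qed.

Lemma mag_homog_malg_map d h f :
  cancel h basis_leaves -> assoc_homog d f -> mag_homog d (malg_map h f).
Proof.
move=> hK fd _ /msupp_malg_map[w wf ->].
have -> : Defs.mdeg (h w) = size (basis_leaves (h w)) by case: (h w).
by rewrite hK; apply: fd.
Qed.

Lemma mag_multilinear_malg_map h f :
  cancel h basis_leaves -> assoc_multilinear f -> mag_multilinear (malg_map h f).
Proof.
move=> hK fml _ /msupp_malg_map[w wf ->].
by rewrite -[perm_eq _ _]/(perm_eq (basis_leaves (h w)) _) hK; apply: fml.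
Qed.

Lemma malg_map_act (s : {perm 'I_n}) h f :
  (forall w, h (map s w) = omap (relabel s) (h w)) ->
  malg_map h (assoc_act s f) = mag_act s (malg_map h f).
Proof.
move=> hs; rewrite -[assoc_act s f]/(malg_map (map s) f) -[mag_act s _]/(malg_map _ _).
by rewrite !malg_map_comp; apply: eq_bigr => w _ /=; rewrite hs.
Qed.

Lemma lnorm_add_rnorm_eq0 d p q : (2 < d)%N -> assoc_homog d p -> assoc_homog d q ->
  lnorm p + rnorm q = 0 -> p = 0 /\ q = 0.
Proof.
move=> d_gt2 pd qd pq0.
have rnorm_lnorm_word w : lnorm_word w \notin msupp (rnorm q).
  apply/negP => /msupp_malg_map[w' w'q /eqP].
  by rewrite lnorm_word_eq_rnorm_word => /andP[/eqP-> ]; rewrite (qd _ w'q) leqNgt d_gt2.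
have lnorm_rnorm_word w : rnorm_word w \notin msupp (lnorm p).
  apply/negP => /msupp_malg_map[w' w'p /eqP].
  by rewrite eq_sym lnorm_word_eq_rnorm_word => /andP[_]; rewrite (pd _ w'p) leqNgt d_gt2.
split; apply/malgP => w; rewrite mcoeff0.
- have /(congr1 (mcoeff (lnorm_word w))) := pq0.
  rewrite mcoeffD mcoeff0 (mcoeff_outdom (rnorm_lnorm_word w)) addr0.
  by rewrite mcoeff_malg_map_inj //; apply: can_inj (@lnorm_wordK n).
- have /(congr1 (mcoeff (rnorm_word w))) := pq0.
  rewrite mcoeffD mcoeff0 (mcoeff_outdom (lnorm_rnorm_word w)) add0r.
  by rewrite mcoeff_malg_map_inj //; apply: can_inj (@rnorm_wordK n).
Qed.
End NormedEmbeddings.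

Theorem proposition4p8p4 (K : fieldType) (charK0 : [pchar K] =i pred0) (n : nat) :
  (forall f : assocAlg K n,
      assoc_homog n f -> assoc_primitive f ->
      (mag_homog n (lnorm f) /\ mag_primitive (lnorm f)) /\
      (mag_homog n (rnorm f) /\ mag_primitive (rnorm f)))
  /\
  ((2 < n)%N ->
   exists phi1 phi2 : assocAlg K n -> magAlg K n,
     (* both maps are linear on Lie(n) *)
     (forall (c : K) (p q : assocAlg K n), in_Lie p -> in_Lie q ->
        phi1 (c *: p + q) = c *: phi1 p + phi1 q /\
        phi2 (c *: p + q) = c *: phi2 p + phi2 q) /\
     (* they map Lie(n) into Prim Mag(n) *)
     (forall p, in_Lie p -> in_PrimMag (phi1 p) /\ in_PrimMag (phi2 p)) /\
     (* they are Sigma_n-equivariant *)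
     (forall (s : {perm 'I_n}) p, in_Lie p ->
        phi1 (assoc_act s p) = mag_act s (phi1 p) /\
        phi2 (assoc_act s p) = mag_act s (phi2 p)) /\
     (* the induced map Lie(n) (+) Lie(n) -> Prim Mag(n) is injective *)
     (forall p q, in_Lie p -> in_Lie q -> phi1 p + phi2 q = 0 -> p = 0 /\ q = 0)).
Proof.
split=> [f fn fprim|n_gt2].
  by split; split; [apply: mag_homog_malg_map (@lnorm_wordK n) fn | apply: lnorm_primitive
                   | apply: mag_homog_malg_map (@rnorm_wordK n) fn | apply: rnorm_primitive].
exists (@lnorm K n), (@rnorm K n); split; [|split; [|split]].
- by move=> c p q _ _; split; apply: linext_is_linear.
- move=> p [/lie_primitive pprim pml].
  by split; split; [apply: lnorm_primitive | apply: mag_multilinear_malg_map (@lnorm_wordK n) pml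
                   | apply: rnorm_primitive | apply: mag_multilinear_malg_map (@rnorm_wordK n) pml].
- by move=> s p _; split; apply: malg_map_act => w; [apply: lnorm_word_map | apply: rnorm_word_map].
- move=> p q [_ /assoc_multilinear_homog pn] [_ /assoc_multilinear_homog qn].
  exact: lnorm_add_rnorm_eq0 n_gt2 pn qn.
Qed.
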